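(* Let $n\ge 1$, let $A\in\mathbb{R}^{n\times n}$ be symmetric positive definite with rows $a_1^\top,\dots,a_n^\top$, let $b\in\mathbb{R}^n$, let $L=\lambda_{\max}(A)$ and let $\gamma>0$. For $x\in\mathbb{R}^n$ form the $n+2$ tokens (row vectors in $\mathbb{R}^{2n+1}$) $$\tilde a_i^\top=[a_i^\top\ \ e_i^\top\ \ 0]\ (i=1,\dots,n),\qquad \tilde b^\top=[0_n^\top\ \ b^\top\ \ 1],\qquad \tilde x^\top=[x^\top\ \ 0_n^\top\ \ 1],$$ where $e_i$ are the standard basis vectors of $\mathbb{R}^n$. Then there exist fixed matrices $W_Q,W_K\in\mathbb{R}^{(2n+1)\times(n+1)}$ and $W_V\in\mathbb{R}^{(2n+1)\times n}$, not depending on $A$, $b$ or $x$, such that the output of the single linear-attention head with these weights, evaluated at the $x$-token, equals $Ax+b$. Consequently, applying this head followed by a residual connection on the $x$-token with post-map $-\gamma I_n$ maps $x_k$ to $x_{k+1}=x_k-\gamma(Ax_k+b)$. Moreover, if $0<\gamma<2/L$, then for any $x_0\in\mathbb{R}^n$ the iterates $x_k$ produced by repeating this step converge linearly to $x^\star=-A^{-1}b$, the minimizer of $\tfrac12 x^\top Ax+b^\top x$.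
   Context: A single linear-attention head with weights $W_Q,W_K,W_V$ acts on a sequence of tokens $z_1,\dots,z_N$ (row vectors) by producing at token $j$ the output $o_j=\sum_{i=1}^N\langle z_jW_Q,\,z_iW_K\rangle\, z_iW_V$ (no softmax). A residual connection with post-map $P$ on a token $z$ whose first $n$ coordinates hold $x$ replaces $x$ by $x+P\,o$ where $o$ is the head output at that token. *)

(* Vectors are ROW vectors 'rV[R]_d (as in the paper's tokens);
   a column vector v of the paper corresponds to the row v^T here, so
   "A x" is written  x *m A^T  and  "A^{-1} b"  is written  b *m (invmx A)^T. *)
From HB Require Import structures.
From mathcomp Require Import all_boot all_order all_algebra.
From mathcomp Require Import reals.
Set Implicit Arguments. Unset Strict Implicit. Unset Printing Implicit Defensive.
Import Order.TTheory GRing.Theory Num.Theory.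
Local Open Scope ring_scope.

Section Defs.
Variable R : realType.

Definition dotr (d : nat) (u v : 'rV[R]_d) : R := (u *m v^T) 0 0.
Definition enorm (d : nat) (v : 'rV[R]_d) : R := Num.sqrt (dotr v v).

Definition spd (n : nat) (A : 'M[R]_n) : Prop :=
  A^T = A /\ forall v : 'rV[R]_n, v != 0 -> 0 < (v *m A *m v^T) 0 0.

Definition is_lambda_max (n : nat) (A : 'M[R]_n) (L : R) : Prop :=
  eigenvalue A L /\ forall a : R, eigenvalue A a -> a <= L.

Definition linattn (N d p q : nat) (WQ WK : 'M[R]_(d, p)) (WV : 'M[R]_(d, q))
  (Z : 'M[R]_(N, d)) (j : 'I_N) : 'rV[R]_q :=
  \sum_(i < N) dotr (row j Z *m WQ) (row i Z *m WK) *: (row i Z *m WV).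

(* The n+2 tokens in R^{2n+1}, as rows of a matrix:
   rows 0..n-1 : [a_i^T  e_i^T  0],  row n : [0  b^T  1],  row n+1 : [x^T  0  1]. *)
Definition tokens (n : nat) (A : 'M[R]_n) (b x : 'rV[R]_n) : 'M[R]_(n + (1 + 1), n + n + 1) :=
  col_mx (row_mx (row_mx A 1%:M) 0)
         (col_mx (row_mx (row_mx 0 b) 1%:M) (row_mx (row_mx x 0) 1%:M)).

Definition xtok (n : nat) : 'I_(n + (1 + 1)) := rshift n (rshift 1 ord0).

Definition tf_step (n p : nat) (WQ WK : 'M[R]_(n + n + 1, p)) (WV : 'M[R]_(n + n + 1, n))
  (P : 'M[R]_n) (A : 'M[R]_n) (b : 'rV[R]_n) (x : 'rV[R]_n) : 'rV[R]_n :=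
  x + linattn WQ WK WV (tokens A b x) (xtok n) *m P^T.

Definition quadf (n : nat) (A : 'M[R]_n) (b y : 'rV[R]_n) : R :=
  (y *m A *m y^T) 0 0 / 2 + dotr b y.

End Defs.

From mathcomp Require Import all_boot all_order all_algebra.
From mathcomp Require Import reals ring lra.
From mathcomp Require Import classical_sets boolp topology normedtype derive.
Set Implicit Arguments. Unset Strict Implicit. Unset Printing Implicit Defensive.
Import Order.TTheory GRing.Theory Num.Theory.
Import numFieldNormedType.Exports.
Local Open Scope ring_scope.

(* Queries and keys keep the first block and the last coordinate of a token,
   values read its middle block.  The x-token [x 0 1] then scores <x, a_i>
   against the i-th row token, whose value is e_i, and 1 against the b-token,
   whose value is b; its own value is 0.  So the head outputs A x + b and the
   residual step is gradient descent x - gamma (A x + b) on the quadratic.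
   The error then evolves by the symmetric matrix M = I - gamma A.  The
   maximum r^2 of the Rayleigh quotient of M^2 on the (compact) unit sphere
   bounds |v M| <= r |v| and is attained at an eigenvector of M^2, so r or -r
   is an eigenvalue of M, i.e. of the form 1 - gamma a with a an eigenvalue
   of A in (0, L]; as gamma L < 2 this forces r < 1. *)

Lemma continuous_sum (T : topologicalType) (K : numFieldType) (I : Type)
    (s : seq I) (F : I -> T -> K) :
  (forall i, continuous (F i)) -> continuous (fun x => \sum_(i <- s) F i x).
Proof.
move=> F_cont; elim: s => [|i s IH].
  under eq_fun do rewrite big_nil; exact: cst_continuous.
under eq_fun do rewrite big_cons.
by move=> x; apply: continuousD; [exact: F_cont | exact: IH].
Qed.

Lemma eigenvalue_sqr (F : fieldType) (n : nat) (M : 'M[F]_n) (r : F) :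
  eigenvalue (M *m M) (r ^+ 2) -> eigenvalue M r \/ eigenvalue M (- r).
Proof.
move=> /eigenvalueP [v vMM v_nz]; set u := v *m M - r *: v.
have [u0 | u_nz] := eqVneq u 0.
  left; apply/eigenvalueP; exists v => //.
  by apply/eqP; rewrite -subr_eq0 -/u u0.
right; apply/eigenvalueP; exists u => //.
by rewrite /u mulmxBl -mulmxA vMM -scalemxAl scaleNr scalerBr scalerA -expr2 opprB.
Qed.

Lemma iter_contract (T : Type) (R : realType) (e : T -> R) (f : T -> T) (r : R) :
  0 <= r -> (forall y, e (f y) <= r * e y) ->
  forall x k, e (iter k f x) <= r ^+ k * e x.
Proof.
move=> r_ge0 f_contr x; elim=> [|k IH]; first by rewrite expr0 mul1r.
by rewrite iterS exprS -mulrA; apply: le_trans (f_contr _) _; rewrite ler_wpM2l.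
Qed.

Section InnerProduct.
Variables (R : realType) (n : nat).
Implicit Types (u v : 'rV[R]_n).

Lemma dotr0 u : dotr u 0 = 0.
Proof. by rewrite /dotr trmx0 mulmx0 mxE. Qed.

Lemma dotr_row u (A : 'M[R]_n) i : dotr u (row i A) = (u *m A^T) 0 i.
Proof. by rewrite /dotr !mxE; apply: eq_bigr => j _; rewrite !mxE. Qed.

Lemma dotrr_ge0 v : 0 <= dotr v v.
Proof. by rewrite /dotr mxE; apply: sumr_ge0 => j _; rewrite mxE -expr2 sqr_ge0. Qed.

Lemma dotrr_eq0 v : (dotr v v == 0) = (v == 0).
Proof.
apply/eqP/eqP => [|->]; last exact: dotr0.
rewrite /dotr mxE => /eqP; rewrite psumr_eq0 => [/allP v0|j _]; last first.
  by rewrite mxE -expr2 sqr_ge0.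
apply/rowP => j; have := v0 j (mem_index_enum j).
by rewrite !mxE -expr2 sqrf_eq0 => /eqP.
Qed.

Lemma dotrr_gt0 v : v != 0 -> 0 < dotr v v.
Proof. by rewrite lt_def dotrr_eq0 dotrr_ge0 andbT. Qed.

End InnerProduct.

Section QuadraticForm.
Local Open Scope classical_set_scope.
Variables (R : realType) (n : nat).
Implicit Types (u v w : 'rV[R]_n) (B : 'M[R]_n).

Definition qform B v : R := (v *m B *m v^T) 0 0.

Lemma qform0 B : qform B 0 = 0.
Proof. by rewrite /qform !mul0mx mxE. Qed.

Lemma qform1 v : qform 1%:M v = dotr v v.
Proof. by rewrite /qform mulmx1. Qed.

Lemma qformZ B c v : qform B (c *: v) = c ^+ 2 * qform B v.
Proof. by rewrite /qform linearZ /= -scalemxAr -!scalemxAl !mxE mulrA expr2. Qed.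

Lemma qformBZ B1 B2 c v : qform (B1 - c *: B2) v = qform B1 v - c * qform B2 v.
Proof. by rewrite /qform mulmxBr mulmxBl -scalemxAr -scalemxAl !mxE. Qed.

Lemma qform_mul_tr (M : 'M[R]_n) v : qform (M *m M^T) v = dotr (v *m M) (v *m M).
Proof. by rewrite /qform /dotr trmx_mul !mulmxA. Qed.

Lemma qformDZ B v w (s : R) : B^T = B ->
  qform B (v + s *: w) = qform B v + 2 * s * (v *m B *m w^T) 0 0 + s ^+ 2 * qform B w.
Proof.
move=> B_sym; have cross : w *m B *m v^T = v *m B *m w^T.
  transitivity ((w *m B *m v^T)^T).
    by apply/matrixP => i j; rewrite !ord1 [RHS]mxE.
  by rewrite !trmx_mul trmxK B_sym mulmxA.
rewrite /qform linearD /= linearZ /= !mulmxDl !mulmxDr -!scalemxAl -!scalemxAr.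
by rewrite cross !mxE; ring.
Qed.

Lemma qform_nonpos_ker N v0 : N^T = N -> (forall v, qform N v <= 0) ->
  qform N v0 = 0 -> v0 *m N = 0.
Proof.
move=> N_sym N_le0 v0_0; set w := v0 *m N; set c := dotr w w; set g := qform N w.
(* the form stays <= 0 along v0 + s w, which for small s > 0 forces |w|^2 = 0 *)
have line s : 2 * s * c + s ^+ 2 * g <= 0.
  by have := N_le0 (v0 + s *: w); rewrite qformDZ // v0_0 add0r.
have g_le0 : g <= 0 := N_le0 w.
pose s := c / (1 - g).
have s_def : s * (1 - g) = c.
  by rewrite mulfVK // gt_eqF // subr_gt0 (le_lt_trans g_le0 ltr01).
have c0 : c = 0.
  have := line s; rewrite -s_def => line_s.
  have -> : s = 0 by nra.
  by rewrite mul0r.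
by apply/eqP; rewrite -dotrr_eq0 -/c c0.
Qed.

Lemma qform_continuous B : continuous (qform B).
Proof.
have -> : qform B = fun v => \sum_j (\sum_i v 0 i * B i j) * v 0 j.
  apply: funext => v; rewrite /qform mxE; apply: eq_bigr => j _.
  by rewrite !mxE; congr (_ * _); apply: eq_bigr => i _; rewrite mxE.
apply: continuous_sum => j v; apply: continuousM; last exact: coord_continuous.
apply: (continuous_sum (F := fun i (w : 'rV[R]_n) => w 0 i * B i j)) => i w.
by apply: continuousM; [exact: coord_continuous | exact: cst_continuous].
Qed.

Definition unit_sphere : set 'rV[R]_n := [set v | dotr v v = 1].

Lemma compact_unit_sphere : compact unit_sphere.
Proof.
pose cube := [set v : 'rV[R]_n | forall i, `[-1, 1] (v ord0 i)].
apply: (@subclosed_compact _ _ cube).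
- have -> : unit_sphere = qform 1%:M @^-1` [set 1].
    by apply/seteqP; split => v /=; rewrite qform1.
  by apply: preimage_closed; [move=> v _; exact: qform_continuous | exact: closed_eq].
- exact: (@rV_compact R n (fun=> `[-1, 1]) (fun=> @segment_compact _ _ _)).
- move=> v; rewrite /unit_sphere /= => v_unit i; have : v 0 i ^+ 2 <= 1.
    move: v_unit; rewrite /dotr mxE (bigD1 i) //= mxE -expr2 => <-.
    by rewrite lerDl; apply: sumr_ge0 => j _; rewrite mxE -expr2 sqr_ge0.
  by move=> vi_le1; rewrite /= in_itv /=; apply/andP; split; nra.
Qed.

Lemma rayleigh_max B : (0 < n)%N ->
  exists2 v0, dotr v0 v0 = 1 & forall v, qform B v <= qform B v0 * dotr v v.
Proof.
move=> n_gt0; have sphere_n0 : unit_sphere !=set0.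
  exists (delta_mx 0 (Ordinal n_gt0)).
  by rewrite /unit_sphere /= /dotr trmx_delta mul_delta_mx mxE.
have qform_cont : {within unit_sphere, continuous (qform B)}.
  by apply: continuous_subspaceT => v; exact: qform_continuous.
have [v0 /[!inE] v0_unit v0_max] := EVT_max_rV sphere_n0 compact_unit_sphere qform_cont.
exists v0 => // v; have [->|v_nz] := eqVneq v 0; first by rewrite qform0 dotr0 mulr0.
have vv_gt0 := dotrr_gt0 v_nz; set t := Num.sqrt (dotr v v).
have t_gt0 : 0 < t by rewrite sqrtr_gt0.
have t2 : t ^+ 2 = dotr v v by rewrite sqr_sqrtr // ltW.
have : t^-1 *: v \in unit_sphere.
  rewrite inE /unit_sphere /= -(qform1 (t^-1 *: v)) qformZ qform1 exprVn t2.
  by rewrite mulVf // gt_eqF.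
move=> /v0_max; rewrite qformZ exprVn t2 -(ler_pM2l vv_gt0) mulrA mulfV ?gt_eqF //.
by rewrite mul1r mulrC.
Qed.

Lemma rayleigh_max_eigen B v0 : B^T = B -> dotr v0 v0 = 1 ->
  (forall v, qform B v <= qform B v0 * dotr v v) -> v0 *m B = qform B v0 *: v0.
Proof.
move=> B_sym v0_unit v0_max; set m := qform B v0.
have : v0 *m (B - m *: 1%:M) = 0.
  apply: qform_nonpos_ker.
  - by rewrite linearB /= linearZ /= trmx1 B_sym.
  - by move=> v; rewrite qformBZ qform1 subr_le0.
  - by rewrite qformBZ qform1 v0_unit mulr1 subrr.
by rewrite mulmxBr -scalemxAr mulmx1 => /eqP; rewrite subr_eq0 => /eqP.
Qed.

Lemma enorm_mulmx_le (M : 'M[R]_n) : (0 < n)%N ->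
  exists r, [/\ 0 <= r, eigenvalue (M *m M^T) (r ^+ 2)
              & forall v, enorm (v *m M) <= r * enorm v].
Proof.
move=> n_gt0; set B := M *m M^T.
have [v0 v0_unit v0_max] := rayleigh_max B n_gt0.
have m_ge0 : 0 <= qform B v0 by rewrite qform_mul_tr dotrr_ge0.
exists (Num.sqrt (qform B v0)); split; first exact: sqrtr_ge0.
- rewrite sqr_sqrtr //; apply/eigenvalueP; exists v0.
    by apply: rayleigh_max_eigen; rewrite // /B trmx_mul trmxK.
  by apply: contra_eq_neq v0_unit => ->; rewrite dotr0 eq_sym oner_neq0.
- move=> v; rewrite /enorm -sqrtrM // ler_sqrt ?mulr_ge0 ?dotrr_ge0 //.
  by rewrite -qform_mul_tr.
Qed.

End QuadraticForm.

Section LinearAttention.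
Variables (R : realType) (d p q : nat) (WK : 'M[R]_(d, p)) (WV : 'M[R]_(d, q)).

Definition attend (N : nat) (s : 'rV[R]_p) (Z : 'M[R]_(N, d)) : 'rV[R]_q :=
  \sum_(i < N) dotr s (row i Z *m WK) *: (row i Z *m WV).

Lemma linattnE (N : nat) (WQ : 'M[R]_(d, p)) (Z : 'M[R]_(N, d)) (j : 'I_N) :
  linattn WQ WK WV Z j = attend (row j Z *m WQ) Z.
Proof. by []. Qed.

Lemma attend_col_mx (N1 N2 : nat) s (Z1 : 'M[R]_(N1, d)) (Z2 : 'M[R]_(N2, d)) :
  attend s (col_mx Z1 Z2) = attend s Z1 + attend s Z2.
Proof.
by rewrite /attend big_split_ord; congr (_ + _); apply: eq_bigr => i _;
  rewrite ?rowKu ?rowKd.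
Qed.

Lemma attend_row s (z : 'rV[R]_d) :
  attend s z = dotr s (z *m WK) *: (z *m WV).
Proof. by rewrite /attend big_ord1 row_id. Qed.

End LinearAttention.

Section AttentionWeights.
Variables (R : realType) (n : nat).

Definition embed_coords : 'M[R]_(n, n.+1) := \matrix_(i, j) (i == j :> nat)%:R.
Definition last_coord : 'rV[R]_n.+1 := \row_j (j == n :> nat)%:R.

Definition WQK : 'M[R]_(n + n + 1, n.+1) := col_mx (col_mx embed_coords 0) last_coord.
Definition WV : 'M[R]_(n + n + 1, n) := col_mx (col_mx 0 1%:M) 0.

Lemma embed_coords_orth : embed_coords *m embed_coords^T = 1%:M.
Proof.
apply/matrixP => i j; rewrite !mxE (bigD1 (widen_ord (leqnSn n) i)) //= big1.
  by rewrite !mxE eqxx mul1r addr0 eq_sym.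
move=> k /eqP hk; rewrite !mxE; case: eqP => [e|]; last by rewrite mul0r.
by case: hk; apply: val_inj.
Qed.

Lemma last_embed_orth : last_coord *m embed_coords^T = 0.
Proof.
apply/matrixP => i j; rewrite !mxE big1 // => k _; rewrite !mxE.
case: eqP => [kn|]; last by rewrite mul0r.
by case: eqP => [jk|]; [move: (ltn_ord j); rewrite jk kn ltnn | rewrite mulr0].
Qed.

Lemma last_coord_unit : last_coord *m last_coord^T = 1%:M.
Proof.
apply/matrixP => i j; rewrite !ord1 !mxE (bigD1 ord_max) //= big1.
  by rewrite !mxE eqxx mul1r addr0.
move=> k /eqP hk; rewrite !mxE; case: eqP => [e|]; last by rewrite mul0r.
by case: hk; apply: val_inj.
Qed.

Lemma token_mulWQK (u v : 'rV[R]_n) (t : 'rV[R]_1) :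
  row_mx (row_mx u v) t *m WQK = u *m embed_coords + t *m last_coord.
Proof. by rewrite /WQK !mul_row_col mulmx0 addr0. Qed.

Lemma token_mulWV (u v : 'rV[R]_n) (t : 'rV[R]_1) :
  row_mx (row_mx u v) t *m WV = v.
Proof. by rewrite /WV !mul_row_col !mulmx0 mulmx1 add0r addr0. Qed.

Lemma dotr_embed (u u' : 'rV[R]_n) (t t' : 'rV[R]_1) :
  dotr (u *m embed_coords + t *m last_coord) (u' *m embed_coords + t' *m last_coord)
  = dotr u u' + dotr t t'.
Proof.
have embed_last_orth : embed_coords *m last_coord^T = 0.
  by rewrite -[embed_coords]trmxK -trmx_mul last_embed_orth trmx0.
rewrite /dotr linearD /= !trmx_mul mulmxDl !mulmxDr !mulmxA.
rewrite -!(mulmxA u) -!(mulmxA t) embed_coords_orth last_embed_orth.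
by rewrite embed_last_orth last_coord_unit !mul0mx !mulmx0 !mul1mx addr0 add0r mxE.
Qed.

Lemma linattn_tokens (A : 'M[R]_n) (b x : 'rV[R]_n) :
  linattn WQK WQK WV (tokens A b x) (xtok n) = x *m A^T + b.
Proof.
rewrite linattnE /tokens /xtok !rowKd row_id token_mulWQK.
rewrite !attend_col_mx !attend_row !token_mulWQK !token_mulWV scaler0 addr0.
have dotr11 : dotr (1%:M : 'rV[R]_1) 1%:M = 1 by rewrite /dotr trmx1 mulmx1 mxE.
rewrite dotr_embed dotr0 dotr11 add0r scale1r; congr (_ + _).
rewrite /attend -[RHS]mulmx1 [RHS]mulmx_sum_row; apply: eq_bigr => i _.
rewrite !row_row_mx row0 row1 token_mulWQK token_mulWV dotr_embed dotr0 addr0.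
by rewrite dotr_row.
Qed.

Lemma tf_step_tokens (A : 'M[R]_n) (b x : 'rV[R]_n) (gamma : R) :
  tf_step WQK WQK WV (- gamma)%:M A b x = x - gamma *: (x *m A^T + b).
Proof. by rewrite /tf_step linattn_tokens tr_scalar_mx mul_mx_scalar scaleNr. Qed.

End AttentionWeights.

Section PositiveDefinite.
Variables (R : realType) (n : nat) (A : 'M[R]_n).
Hypothesis A_spd : spd A.

Lemma spd_qform_ge0 v : 0 <= qform A v.
Proof.
have [->|v_nz] := eqVneq v 0; first by rewrite qform0.
exact/ltW/(proj2 A_spd).
Qed.

Lemma spd_eigenvalue_gt0 a : eigenvalue A a -> 0 < a.
Proof.
move=> /eigenvalueP [v vA v_nz]; have := proj2 A_spd v v_nz.
by rewrite vA -scalemxAl mxE pmulr_lgt0 // dotrr_gt0.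
Qed.

Lemma spd_unitmx : A \in unitmx.
Proof.
rewrite -row_free_unit -kermx_eq0; apply: contraT => ker_nz.
have u_nz : nz_row (kermx A) != 0 by rewrite nz_row_eq0.
have uA : nz_row (kermx A) *m A = 0 by apply/sub_kermxP; exact: nz_row_sub.
by have := proj2 A_spd _ u_nz; rewrite uA mul0mx mxE ltxx.
Qed.

Lemma spd_minimizer_mulmx (b : 'rV[R]_n) : - (b *m (invmx A)^T) *m A = - b.
Proof.
rewrite -{2}(proj1 A_spd) mulNmx -mulmxA -trmx_mul.
by rewrite mulmxV ?spd_unitmx // trmx1 mulmx1.
Qed.

Lemma quadf_min (b xs y : 'rV[R]_n) : xs *m A = - b -> quadf A b xs <= quadf A b y.
Proof.
move=> xsA; have -> : y = xs + 1 *: (y - xs) by rewrite scale1r addrC subrK.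
have quadfE z : quadf A b z = qform A z / 2 + dotr b z by [].
have cross : (- b *m (y - xs)^T) 0 0 = - dotr b (y - xs) by rewrite mulNmx mxE.
have dotrD : dotr b (xs + (y - xs)) = dotr b xs + dotr b (y - xs).
  by rewrite /dotr linearD mulmxDr mxE.
rewrite !quadfE qformDZ ?(proj1 A_spd) // xsA cross scale1r dotrD.
by have := spd_qform_ge0 (y - xs); lra.
Qed.

End PositiveDefinite.

Section GradientStep.
Variables (R : realType) (n : nat) (A : 'M[R]_n) (L gamma : R).
Hypotheses (A_spd : spd A) (L_max : is_lambda_max A L).
Hypotheses (gamma_gt0 : 0 < gamma) (gamma_lt : gamma < 2 / L).

Definition gd_matrix : 'M[R]_n := 1%:M - gamma *: A.

Lemma gd_matrix_sym : gd_matrix^T = gd_matrix.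
Proof. by rewrite /gd_matrix linearB /= linearZ /= trmx1 (proj1 A_spd). Qed.

Lemma gd_step_error (b xs y : 'rV[R]_n) : xs *m A = - b ->
  y - gamma *: (y *m A^T + b) - xs = (y - xs) *m gd_matrix.
Proof.
move=> xsA; rewrite (proj1 A_spd) /gd_matrix mulmxBr mulmx1 -scalemxAr.
by rewrite mulmxBl xsA opprK addrAC.
Qed.

Lemma gd_eigenvalue_bound c : eigenvalue gd_matrix c -> -1 < c < 1.
Proof.
move=> /eigenvalueP [v vM v_nz]; set a := (1 - c) / gamma.
have vA : v *m A = a *: v.
  apply: (scalerI (lt0r_neq0 gamma_gt0)).
  rewrite scalemxAr scalerA mulrC divfK ?gt_eqF // scalerBl scale1r -vM.
  by rewrite /gd_matrix mulmxBr mulmx1 opprB addrC subrK.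
have a_gt0 : 0 < a by apply: (spd_eigenvalue_gt0 A_spd); apply/eigenvalueP; exists v.
have a_le : a <= L by apply: (proj2 L_max); apply/eigenvalueP; exists v.
have L_gt0 : 0 < L := lt_le_trans a_gt0 a_le.
have gammaL : gamma * L < 2 by rewrite -ltr_pdivlMr.
have ga : gamma * a = 1 - c by rewrite mulrC divfK ?gt_eqF.
have ga_gt0 : 0 < gamma * a by rewrite mulr_gt0.
have ga_le : gamma * a <= gamma * L by rewrite ler_pM2l.
by apply/andP; split; lra.
Qed.

Lemma gd_contraction : (0 < n)%N ->
  exists r, 0 <= r /\ r < 1 /\ forall v, enorm (v *m gd_matrix) <= r * enorm v.
Proof.
move=> n_gt0; have [r [r_ge0 eig_r M_le]] := enorm_mulmx_le gd_matrix n_gt0.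
exists r; do !split => //.
rewrite gd_matrix_sym in eig_r.
by case: (eigenvalue_sqr eig_r) => /gd_eigenvalue_bound /andP[]; lra.
Qed.

End GradientStep.

Theorem proposition1 (R : realType) (n : nat) (hn : (0 < n)%N) :
  exists (WQ WK : 'M[R]_(n + n + 1, n.+1)) (WV : 'M[R]_(n + n + 1, n)),
    (* the head output at the x-token is A x + b *)
    (forall (A : 'M[R]_n) (b x : 'rV[R]_n), spd A ->
       linattn WQ WK WV (tokens A b x) (xtok n) = x *m A^T + b)
    /\
    (* head + residual with post-map -gamma I is a gradient step *)
    (forall (A : 'M[R]_n) (b x : 'rV[R]_n) (gamma : R), spd A -> 0 < gamma ->
       tf_step WQ WK WV (- gamma)%:M A b x = x - gamma *: (x *m A^T + b))
    /\
    (* linear convergence to the minimizer x* = - A^{-1} b *)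
    (forall (A : 'M[R]_n) (b : 'rV[R]_n) (L gamma : R),
       spd A -> is_lambda_max A L -> 0 < gamma -> gamma < 2 / L ->
       let xstar := - (b *m (invmx A)^T) in
       (forall y : 'rV[R]_n, quadf A b xstar <= quadf A b y) /\
       exists rho : R, 0 <= rho /\ rho < 1 /\
         forall (x0 : 'rV[R]_n) (k : nat),
           enorm (iter k (tf_step WQ WK WV (- gamma)%:M A b) x0 - xstar)
             <= rho ^+ k * enorm (x0 - xstar)).
Proof.
exists (WQK R n), (WQK R n), (WV R n).
split; first by move=> A b x _; exact: linattn_tokens.
split; first by move=> A b x gamma _ _; exact: tf_step_tokens.
move=> A b L gamma A_spd L_max gamma_gt0 gamma_lt xstar.
have xstarA : xstar *m A = - b := spd_minimizer_mulmx A_spd b.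
split=> [y|]; first exact: quadf_min.
have [r [r_ge0 [r_lt1 contr]]] := gd_contraction A_spd L_max gamma_gt0 gamma_lt hn.
exists r; do 2!split=> //; move=> x0 k.
apply: (iter_contract (e := fun y => enorm (y - xstar))) => // y.
by rewrite tf_step_tokens gd_step_error.
Qed.
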